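(* Let $n \geq 2$, $N = \frac{n(n+1)}{2}$, fix $1 \leq i < j \leq k < n$, and put $x = \lambda_{k,i}$, $y = \lambda_{k,j}$. Let $\mathcal{A}$, $V_{\mathcal{A}}$ and its $U(\mathfrak{gl}(n,\mathbb{C}))$-module structure be as in the context. Let $\mathcal{B} \subset \mathcal{A}$ be the subalgebra of functions in $\mathcal{A}$ that are also regular at every $1$-critical point (see context). Let $\tau$ be the involution of $\mathbb{Z}^N$ swapping the coordinates $(k,i)$ and $(k,j)$, and for $z \in \mathbb{Z}^N_0$ define $$S(z) = \frac{T(z) + T(\tau(z))}{2}, \qquad A(z) = \frac{T(z) - T(\tau(z))}{2(x-y)} \qquad \text{in } V_{\mathcal{A}}.$$ Let $V_{\mathcal{B}} \subset V_{\mathcal{A}}$ be the $\mathcal{B}$-submodule generated by $\{S(z), A(z) \mid z \in \mathbb{Z}^N_0\}$. Then $V_{\mathcal{B}}$ is a $U(\mathfrak{gl}(n,\mathbb{C}))$-submodule of $V_{\mathcal{A}}$.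
   Context: Points $v \in \mathbb{C}^N$ are arrays $(v_{r,s})_{1 \leq s \leq r \leq n}$ and $\lambda_{r,s}$ is the coordinate function $v \mapsto v_{r,s}$. A point $v$ is generic if for all $1 \leq a < b \leq r < n$ one has $v_{r,a} - v_{r,b} \notin \mathbb{Z}$. A point $v$ is called $1$-critical (for the fixed pair) if $v_{k,i} = v_{k,j}$ and for every other pair $(r,a) \neq (r,b)$ of positions in the same row $r < n$ with $\{(r,a),(r,b)\} \neq \{(k,i),(k,j)\}$ one has $v_{r,a} - v_{r,b} \notin \mathbb{Z}$. $\mathcal{A}$ is the ring of rational functions $g/h$ ($g,h$ polynomials in the $\lambda_{r,s}$) with $h(v) \neq 0$ at every generic $v$; $\mathcal{B}$ consists of those $f \in \mathcal{A}$ which can be written with a denominator nonvanishing also at every $1$-critical point (e.g. $1/(x-y) \in \mathcal{A} \setminus \mathcal{B}$). $\mathbb{Z}^N_0$ is the set of $z \in \mathbb{Z}^N$ with $z_{n,s} = 0$ for all $s$; $\delta^{r,s} \in \mathbb{Z}^N$ is the unit vector at position $(r,s)$. For a rational function $f$ and $z \in \mathbb{Z}^N$, $f(\lambda^z)$ denotes $v \mapsto f(v+z)$. Put $p^{\pm}_{r,s} = \prod_{t=1}^{r \pm 1} (\lambda_{r,s} - \lambda_{r \pm 1, t})$, $q_{r,s} = \prod_{t \neq s,\, 1 \leq t \leq r} (\lambda_{r,s} - \lambda_{r,t})$, $|\lambda|_r = \lambda_{r,1} + \cdots + \lambda_{r,r}$, $|\lambda|_0 = 0$. $V_{\mathcal{A}}$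 is the free $\mathcal{A}$-module with basis $\{T(z) \mid z \in \mathbb{Z}^N_0\}$, equipped with the $U(\mathfrak{gl}(n,\mathbb{C}))$-module structure by $\mathcal{A}$-linear operators given on basis vectors by $E_{r,r+1} T(z) = -\sum_{s=1}^r \frac{p^+_{r,s}(\lambda^z)}{q_{r,s}(\lambda^z)} T(z + \delta^{r,s})$, $E_{r+1,r} T(z) = \sum_{s=1}^r \frac{p^-_{r,s}(\lambda^z)}{q_{r,s}(\lambda^z)} T(z - \delta^{r,s})$ for $1 \leq r < n$, and $E_{r,r} T(z) = (|\lambda^z|_r - |\lambda^z|_{r-1} + r - 1) T(z)$ for $1 \leq r \leq n$ (these formulas do define a $U(\mathfrak{gl}(n,\mathbb{C}))$-module). The element $A(z)$ is a vector of $V_{\mathcal{A}}$, not to be confused with the algebra $\mathcal{A}$. *)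

From HB Require Import structures.
From mathcomp Require Import all_boot all_order all_algebra.
From mathcomp Require Import complex.
From mathcomp Require Import Rstruct.
From mathcomp Require Import fraction mpoly.

Set Implicit Arguments.
Unset Strict Implicit.
Unset Printing Implicit Defensive.

Import Order.TTheory GRing.Theory Num.Theory.
Local Open Scope ring_scope.

Definition CC : numClosedFieldType := complex Rdefinitions.R.

(* Positions (r,s), 1 <= s <= r <= n, encoded 0-based: (r-1, s-1) with s-1 <= r-1 < n. *)
Definition pos (n : nat) := {p : 'I_n * 'I_n | (nat_of_ord p.2 <= nat_of_ord p.1)%N}.

(* N = #|pos n| = n(n+1)/2 ; variables lambda_{r,s} are 'X_(enum_rank p). *)
Definition Nv (n : nat) := #|{: pos n}|.

Definition Pol (n : nat) := {mpoly CC[Nv n]}.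
Definition Frac (n : nat) := {fraction Pol n}.
Definition toF n (p : Pol n) : Frac n := @FracField.tofrac (Pol n) p.

Definition mkpos (n r s : nat) : option (pos n) :=
  match @insub nat (fun m => (m < n)%N) 'I_n r, @insub nat (fun m => (m < n)%N) 'I_n s with
  | Some r', Some s' => @insub ('I_n * 'I_n) (fun p => (nat_of_ord p.2 <= nat_of_ord p.1)%N) (pos n) (r', s')
  | _, _ => None
  end.

Definition point (n : nat) := pos n -> CC.
Definition Zvec (n : nat) := {ffun pos n -> int}.

(* coordinate v_{r,s} (0-based r, s); 0 outside the range, never used there *)
Definition vat n (v : point n) (r s : nat) : CC :=
  if mkpos n r s is Some p then v p else 0.
Definition zat n (z : Zvec n) (r s : nat) : int :=
  if mkpos n r s is Some p then z p else 0.

Definition evalP n (h : Pol n) (v : point n) : CC :=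
  h.@[fun i => v (enum_val i)].

Definition is_int (c : CC) : Prop := exists m : int, c = m%:~R.

(* generic: for 1 <= a < b <= r < n (paper), v_{r,a} - v_{r,b} not in Z *)
Definition generic n (v : point n) : Prop :=
  forall r a b : nat, (r.+1 < n)%N -> (a < b)%N -> (b <= r)%N ->
    ~ is_int (vat v r a - vat v r b).

Definition critical1 n (k i j : nat) (v : point n) : Prop :=
  vat v k i = vat v k j /\
  forall r a b : nat, (r.+1 < n)%N -> (a < b)%N -> (b <= r)%N ->
    ~ (r = k /\ a = i /\ b = j) ->
    ~ is_int (vat v r a - vat v r b).

Definition inA n (f : Frac n) : Prop :=
  exists g h : Pol n, (forall v, generic v -> evalP h v != 0) /\ f = toF g / toF h.
Definition inB n (k i j : nat) (f : Frac n) : Prop :=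
  inA f /\
  exists g h : Pol n,
    (forall v, generic v \/ critical1 k i j v -> evalP h v != 0) /\ f = toF g / toF h.

Definition lam n (r s : nat) : Frac n :=
  if mkpos n r s is Some p then toF ('X_(enum_rank p) : Pol n) else 0.
Definition lamz n (z : Zvec n) (r s : nat) : Frac n := lam n r s + (zat z r s)%:~R.

Definition pplus n (z : Zvec n) (r s : nat) : Frac n :=
  \prod_(t < r.+2) (lamz z r s - lamz z r.+1 t).
Definition pminus n (z : Zvec n) (r s : nat) : Frac n :=
  \prod_(t < r) (lamz z r s - lamz z r.-1 t).
Definition qq n (z : Zvec n) (r s : nat) : Frac n :=
  \prod_(t < r.+1 | val t != s) (lamz z r s - lamz z r t).
(* |lambda^z|_r for paper index r (row r-1 0-based); |lambda|_0 = 0 *)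
Definition rowsum n (z : Zvec n) (r : nat) : Frac n :=
  \sum_(t < r) lamz z r.-1 t.

Definition shift n (z : Zvec n) (r s : nat) (c : int) : Zvec n :=
  [ffun p : pos n => z p + (if ((val (sval p).1 == r) && (val (sval p).2 == s)) then c else 0)].

(* vectors of V_A: sum_z w(z) T(z), represented by the coefficient function w *)
Definition vec n := Zvec n -> Frac n.

Definition T n (z : Zvec n) : vec n := fun z' => if z' == z then 1 else 0.

(* The operators, as coefficient-wise formulas (0-based r; paper index r+1):
   E_{r+1,r+2} w = - sum_z sum_s w(z) p^+/q (lambda^z) T(z + delta^{r,s})
   E_{r+2,r+1} w =   sum_z sum_s w(z) p^-/q (lambda^z) T(z - delta^{r,s})
   E_{r+1,r+1} w =   sum_z w(z) (|lambda^z|_{r+1} - |lambda^z|_r + r) T(z) *)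
Definition Eup n (r : nat) (w : vec n) : vec n := fun z' =>
  - \sum_(s < r.+1)
      (pplus (shift z' r s (-1)) r s / qq (shift z' r s (-1)) r s) * w (shift z' r s (-1)).
Definition Edown n (r : nat) (w : vec n) : vec n := fun z' =>
  \sum_(s < r.+1)
      (pminus (shift z' r s 1) r s / qq (shift z' r s 1) r s) * w (shift z' r s 1).
Definition Ediag n (r : nat) (w : vec n) : vec n := fun z' =>
  (rowsum z' r.+1 - rowsum z' r + r%:R) * w z'.

Definition inZ0 n (z : Zvec n) : Prop := forall s : nat, (s < n)%N -> zat z n.-1 s = 0.

Definition tau n (k i j : nat) (z : Zvec n) : Zvec n :=
  [ffun p : pos n =>
     if (val (sval p).1 == k) && (val (sval p).2 == i) then zat z k j
     else if (val (sval p).1 == k) && (val (sval p).2 == j) then zat z k i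
     else z p].

Definition Svec n (k i j : nat) (z : Zvec n) : vec n := fun z' =>
  (T z z' + T (tau k i j z) z') / 2%:R.
Definition Avec n (k i j : nat) (z : Zvec n) : vec n := fun z' =>
  (T z z' - T (tau k i j z) z') / (2%:R * (lam n k i - lam n k j)).

Definition inVB n (k i j : nat) (w : vec n) : Prop :=
  exists (m : nat) (zs : 'I_m -> Zvec n) (b b' : 'I_m -> Frac n),
    (forall l, inZ0 (zs l) /\ inB k i j (b l) /\ inB k i j (b' l)) /\
    forall z', w z' = \sum_(l < m) (b l * Svec k i j (zs l) z' + b' l * Avec k i j (zs l) z').

From HB Require Import structures.
From mathcomp Require Import all_boot all_order all_algebra.
From mathcomp Require Import complex Rstruct fraction mpoly.
From mathcomp Require Import ring zify.
Set Implicit Arguments.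
Unset Strict Implicit.
Unset Printing Implicit Defensive.
Import Order.TTheory GRing.Theory Num.Theory.
Local Open Scope ring_scope.

(* On T(z), E_{r,r+1} and E_{r+1,r} are sums over s of c_s(z) T(z -+ delta^{r,s}), and tau maps
   the shift at (r,s) to the shift at (r, sigma s), sigma exchanging the columns i and j of row k.
   So 2 E S(z) and 2 (x - y) E A(z) are sums of terms al T(z') + be T(tau z'), resp.
   al T(z') - be T(tau z'), with al = c_s(z) and be = c_{sigma s}(tau z), and
     (al T(z') + be T(tau z')) / 2 = (al + be)/2 S(z') + (al - be)(x - y)/2 A(z'),
     (al T(z') - be T(tau z')) / (2 (x - y)) = g/2 S(z') + (al + be)/2 A(z')
        when al - be = (x - y) g,
   while A(z) = 0 when z_{k,i} = z_{k,j}.  It remains to see that al + be, (al - be)(x - y) and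
   (al - be)/(x - y) lie in B.  The only factor of a denominator q_{r,s} that may vanish at a
   1-critical point is lambda^z_{k,i} - lambda^z_{k,j} with z_{k,i} = z_{k,j}.  Off row k
   everything is tau-invariant, tau changes products over the pair (k,i), (k,j) by multiples of
   x - y, and in the remaining case s = i the singular factors x - y cancel because a difference
   of products of linear forms is divisible by the difference of the variables.  E_{r,r} is
   diagonal with a tau-invariant eigenvalue. *)

Lemma bigD1_ord_nat (R : Type) (idx : R) (op : Monoid.com_law idx) m (P : pred nat)
  (F : nat -> R) j0 : (j0 < m)%N -> P j0 ->
  \big[op/idx]_(t < m | P t) F t = op (F j0) (\big[op/idx]_(t < m | P t && (t != j0 :> nat)) F t).
Proof. by move=> hj hP; rewrite (bigD1 (Ordinal hj)). Qed.

Section FieldIdentities.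
Variable F : fieldType.

Lemma div_sub_div (P q q' : F) : q != 0 -> q' != 0 -> P / q - P / q' = P * (q' - q) / q / q'.
Proof. by move=> hq hq'; field; rewrite hq hq'. Qed.

(* the coefficients of the critical case [s = i]: [FX / ((e + d) GX)] and [FY / ((d - e) GY)] with
   [e = x - y], [d = z_{k,i} - z_{k,j}]; "tied" means [d = 0] *)
Lemma tied_sum (FX FY GX GY DF DG e : F) : FX - FY = e * DF -> GX - GY = e * DG ->
  e != 0 -> GX != 0 -> GY != 0 ->
  FX / (e * GX) + FY / (- e * GY) = (DF * GY - FY * DG) / GX / GY.
Proof.
move=> hF hG he hX hY; have hX' : e * DG + GY != 0 by rewrite -hG subrK.
rewrite -[FX](subrK FY) -[GX](subrK GY) hF hG; field.
by rewrite hY hX' oppr_eq0 he.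
Qed.

Lemma tied_diff (FX FY GX GY e : F) : e != 0 -> GX != 0 -> GY != 0 ->
  (FX / (e * GX) - FY / (- e * GY)) * e = FX / GX + FY / GY.
Proof. by move=> he hX hY; field; rewrite oppr_eq0 he hX hY. Qed.

Lemma untied_diff (FX FY GX GY DF DG e d : F) : FX - FY = e * DF -> GX - GY = e * DG ->
  (e + d) * GX != 0 -> (d - e) * GY != 0 ->
  FX / ((e + d) * GX) - FY / ((d - e) * GY) =
  e * ((d * (DF * GY - FY * DG) - (FX * GY + FY * GX)) / ((e + d) * GX) / ((d - e) * GY)).
Proof.
move=> hF hG hX hY.
have key : FX * ((d - e) * GY) - FY * ((e + d) * GX) =
    e * (d * (DF * GY - FY * DG) - (FX * GY + FY * GX)).
  by rewrite -[FX](subrK FY) -[GX](subrK GY) hF hG; ring.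
rewrite !mulrA -key; field.
by move: hX hY; rewrite !mulf_eq0 !negb_or => /andP [-> ->] /andP [-> ->].
Qed.

Lemma recombine_S (a b e Tu Tt : F) : e != 0 -> 2%:R != 0 :> F ->
  2%:R^-1 * (a * Tu + b * Tt) =
  (a + b) / 2%:R * ((Tu + Tt) / 2%:R) + (a - b) * e / 2%:R * ((Tu - Tt) / (2%:R * e)).
Proof. by move=> he h2; field; rewrite he h2. Qed.

Lemma recombine_A (a b e g Tu Tt : F) : e != 0 -> 2%:R != 0 :> F -> a - b = e * g ->
  (2%:R * e)^-1 * (a * Tu - b * Tt) =
  g / 2%:R * ((Tu + Tt) / 2%:R) + (a + b) / 2%:R * ((Tu - Tt) / (2%:R * e)).
Proof. by move=> he h2 hg; rewrite -[a](subrK b) hg; field; rewrite he h2. Qed.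

End FieldIdentities.

Section Positions.
Variable n : nat.

Lemma mkpos_coord r s (p : pos n) : mkpos n r s = Some p ->
  val (sval p).1 = r /\ val (sval p).2 = s.
Proof.
rewrite /mkpos; case: insubP => [r' _ Er|//]; case: insubP => [s' _ Es|//].
by case: insubP => [q _ Eq [<-]|//]; rewrite Eq /= Er Es.
Qed.

Lemma mkpos_exists r s : (s <= r)%N -> (r < n)%N -> exists p, mkpos n r s = Some p.
Proof.
move=> hsr hrn; have hsn : (s < n)%N by apply: leq_ltn_trans hrn.
rewrite /mkpos; case: insubP => [r' _ Er|]; last by rewrite hrn.
case: insubP => [s' _ Es|]; last by rewrite hsn.
case: insubP => [q _ Eq|]; first by exists q.
by rewrite /= Er Es hsr.
Qed.

Lemma mkpos_val (p : pos n) : mkpos n (val (sval p).1) (val (sval p).2) = Some p.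
Proof.
have [q Eq] := mkpos_exists (valP p) (ltn_ord _).
have [h1 h2] := mkpos_coord Eq; rewrite Eq; congr Some.
apply: val_inj; move: h1 h2; rewrite /=.
case: (val q) => a b; case: (val p) => c d /= h1 h2.
by congr pair; apply: val_inj.
Qed.

Lemma zat_val (z : Zvec n) (p : pos n) : zat z (val (sval p).1) (val (sval p).2) = z p.
Proof. by rewrite /zat mkpos_val. Qed.

Lemma eq_zvec (z1 z2 : Zvec n) :
  (forall r s, (s <= r)%N -> (r < n)%N -> zat z1 r s = zat z2 r s) -> z1 = z2.
Proof.
move=> h; apply/ffunP => p; rewrite -!zat_val.
by apply: h; [exact: (valP p) | exact: ltn_ord].
Qed.

Lemma zat_shift (z : Zvec n) r s c r' s' : (s <= r)%N -> (r < n)%N ->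
  zat (shift z r s c) r' s' = zat z r' s' + (if (r' == r) && (s' == s) then c else 0).
Proof.
move=> hsr hrn; rewrite /zat; case E: (mkpos n r' s') => [p|].
  by have [h1 h2] := mkpos_coord E; rewrite /shift ffunE h1 h2.
case: (r' =P r) => [er|]; case: (s' =P s) => [es|] //=; rewrite ?addr0 //.
by subst; have [p Ep] := mkpos_exists hsr hrn; rewrite Ep in E.
Qed.

Lemma shiftK (z : Zvec n) r s c : shift (shift z r s c) r s (- c) = z.
Proof.
apply/ffunP => p; rewrite /shift !ffunE; case: ifP => _; last by rewrite !addr0.
by rewrite addrK.
Qed.

Lemma shiftNK (z : Zvec n) r s c : shift (shift z r s (- c)) r s c = z.
Proof. by rewrite -{2}(opprK c) shiftK. Qed.

Lemma shift_eqE (z z' : Zvec n) r s c : (shift z' r s c == z) = (z' == shift z r s (- c)).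
Proof. by apply/eqP/eqP => [<-|->]; rewrite ?shiftK ?shiftNK. Qed.

End Positions.

Section Swap.
Variables (n k i j : nat).
Hypotheses (hij : (i < j)%N) (hjk : (j <= k)%N) (hkn : (k.+1 < n)%N).
Local Notation tau := (tau k i j).

Lemma zat_tau (z : Zvec n) r s : zat (tau z) r s =
  if (r == k) && (s == i) then zat z k j else if (r == k) && (s == j) then zat z k i
  else zat z r s.
Proof.
rewrite {1}/zat; case E: (mkpos n r s) => [p|].
  have [h1 h2] := mkpos_coord E; rewrite /tau ffunE h1 h2.
  by case: ifP => //; case: ifP => // _ _; rewrite -zat_val h1 h2.
have [hik hkn'] : (i <= k /\ k < n)%N by lia.
case: (r =P k) => [er|]; case: (s =P i) => [es|] //=; rewrite /zat ?E //.
- by subst; have [p Ep] := mkpos_exists hik hkn'; rewrite Ep in E.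
- case: (s =P j) => [es'|_]; rewrite ?E //.
  by subst; have [p Ep] := mkpos_exists hjk hkn'; rewrite Ep in E.
Qed.

Lemma tauK (z : Zvec n) : tau (tau z) = z.
Proof.
apply: eq_zvec => r s _ _; rewrite !zat_tau.
have ji : (j == i) = false by apply/eqP; lia.
case: (r =P k) => [->|] //=; rewrite eqxx /=.
case: (s =P i) => [->|] /=; first by rewrite ji eqxx.
by case: (s =P j) => [->|] //=; rewrite eqxx.
Qed.

Lemma tau_id (z : Zvec n) : zat z k i = zat z k j -> tau z = z.
Proof.
move=> e; apply: eq_zvec => r s _ _; rewrite zat_tau.
case: (r =P k) => [->|] //=.
case: (s =P i) => [->|] /=; first by rewrite e.
by case: (s =P j) => [->|].
Qed.

Definition swap_col r s := if r == k then (if s == i then j else if s == j then i else s) else s.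

Lemma swap_col_le r s : (s <= r)%N -> (swap_col r s <= r)%N.
Proof. by rewrite /swap_col; case: (r =P k) => [->|//]; do 2?case: ifP => _; lia. Qed.

Lemma swap_colK r s : swap_col r (swap_col r s) = s.
Proof.
rewrite /swap_col; case: (r =P k) => // _.
have ji : (j == i) = false by apply/eqP; lia.
case: (s =P i) => [->|]; first by rewrite ji eqxx.
by case: (s =P j) => [->|]; [rewrite eqxx | move=> /eqP/negbTE -> /eqP/negbTE ->].
Qed.

Lemma tau_shift (z : Zvec n) r s c : (s <= r)%N -> (r < n)%N ->
  tau (shift z r s c) = shift (tau z) r (swap_col r s) c.
Proof.
move=> hsr hrn; apply: eq_zvec => r' s' _ _.
rewrite zat_tau !zat_shift ?swap_col_le // zat_tau /swap_col.
case: (r =P k) => ? /=; case: (s =P i) => ? /=; case: (s =P j) => ? /=;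
repeat (case: eqP => ? /=); subst; rewrite ?addr0 //; lia.
Qed.

End Swap.

Section Evaluation.
Variable n : nat.

Definition lamz_poly (z : Zvec n) r s : Pol n :=
  (if mkpos n r s is Some p then 'X_(enum_rank p) else 0) + (zat z r s)%:~R.

Lemma toF_lamz_poly z r s : toF (lamz_poly z r s) = lamz z r s.
Proof.
rewrite /lamz_poly /lamz /lam /toF rmorphD rmorph_int; congr (_ + _).
by case: (mkpos n r s) => [p|] //; rewrite rmorph0.
Qed.

Lemma evalP_lamz_poly z r s v : evalP (lamz_poly z r s) v = vat v r s + (zat z r s)%:~R.
Proof.
rewrite /evalP /lamz_poly mevalD rmorph_int /vat; congr (_ + _).
by case: (mkpos n r s) => [p|]; rewrite ?mevalXU ?enum_rankK ?meval0.
Qed.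

(* its row differences (a - b) sqrt(-1) are never integers for a <> b *)
Definition ipoint : point n := fun p => (val (sval p).2)%:R * 'i.

Lemma vat_ipoint r s : (s <= r)%N -> (r < n)%N -> vat ipoint r s = s%:R * 'i.
Proof.
move=> h1 h2; have [p Ep] := mkpos_exists h1 h2.
by rewrite /vat Ep /ipoint; have [_ ->] := mkpos_coord Ep.
Qed.

Lemma ipoint_generic : generic ipoint.
Proof.
move=> r a b hr hab hbr [m].
rewrite !vat_ipoint -?mulrBl; try lia.
move=> /(congr1 (fun x => x ^+ 2)); rewrite exprMn sqrCi mulrN1 => e.
have : ((m ^+ 2 + (a%:Z - b%:Z) ^+ 2)%:~R : CC) = 0.
  by rewrite rmorphD /= !rmorphXn /= -e rmorphB /= -!pmulrn addNr.
move/eqP; rewrite intr_eq0 => /eqP h.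
have : (a%:Z - b%:Z) ^+ 2 = 0 by nia.
by move/eqP; rewrite expf_eq0 /= subr_eq0 => /eqP [] e2; move: hab; rewrite e2 ltnn.
Qed.

Definition Aden (h : Pol n) := forall v : point n, generic v -> evalP h v != 0.

Lemma Aden_toF_neq0 h : Aden h -> toF h != 0.
Proof.
move=> hA; rewrite /toF tofrac_eq0; apply/eqP => h0.
by move: (hA _ ipoint_generic); rewrite h0 /evalP meval0 eqxx.
Qed.

Lemma is_intN c : is_int c -> is_int (- c).
Proof. by case=> m ->; exists (- m); rewrite rmorphN. Qed.

Lemma evalP_lamz_diff_eq0 (z : Zvec n) r s t v :
  evalP (lamz_poly z r s - lamz_poly z r t) v = 0 ->
  vat v r s - vat v r t = (zat z r t - zat z r s)%:~R.
Proof.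
rewrite /evalP mevalB -!/(evalP _ _) !evalP_lamz_poly => e.
rewrite rmorphB /=; apply/eqP; rewrite -subr_eq0 -e; apply/eqP; ring.
Qed.

Lemma Aden_lamz_diff (z : Zvec n) r s t : (r.+1 < n)%N -> (s <= r)%N -> (t <= r)%N -> s <> t ->
  Aden (lamz_poly z r s - lamz_poly z r t).
Proof.
move=> hr hs ht st v gv; apply/eqP => /evalP_lamz_diff_eq0 e.
case: (ltngtP s t) => [lt|lt|eq] //.
  by apply: (gv r s t) => //; exists (zat z r t - zat z r s).
apply: (gv r t s) => //; rewrite -opprB; apply: is_intN.
by exists (zat z r t - zat z r s).
Qed.

End Evaluation.

Section Denominators.
Variables (n k i j : nat).

Definition Bden (h : Pol n) := forall v, generic v \/ critical1 k i j v -> evalP h v != 0.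

Lemma Bden_Aden h : Bden h -> Aden h.
Proof. by move=> hB v gv; apply: hB; left. Qed.

Lemma Bden_toF_neq0 h : Bden h -> toF h != 0.
Proof. by move/Bden_Aden; exact: Aden_toF_neq0. Qed.

Lemma BdenM h1 h2 : Bden h1 -> Bden h2 -> Bden (h1 * h2).
Proof. by move=> g1 g2 v hv; rewrite /evalP mevalM mulf_neq0 //; [apply: g1 | apply: g2]. Qed.

Lemma Bden_prod (I : Type) (r : seq I) (P : pred I) (F : I -> Pol n) :
  (forall x, P x -> Bden (F x)) -> Bden (\prod_(x <- r | P x) F x).
Proof.
move=> h; apply: big_ind => //; last exact: BdenM.
by move=> v _; rewrite /evalP meval1 oner_eq0.
Qed.

Definition critical_pair r s t := r = k /\ (s = i /\ t = j \/ s = j /\ t = i).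

(* At a 1-critical point only the critical pair of row [k] may differ by an integer. *)
Lemma Bden_lamz_diff (z : Zvec n) r s t : (r.+1 < n)%N -> (s <= r)%N -> (t <= r)%N -> s <> t ->
  (~ critical_pair r s t \/ zat z r s <> zat z r t) ->
  Bden (lamz_poly z r s - lamz_poly z r t).
Proof.
move=> hr hs ht st hc v [gv|[cv1 cv2]]; first exact: Aden_lamz_diff.
apply/eqP => /evalP_lamz_diff_eq0 e.
have [/andP [/eqP er hst] | hnc] :=
  boolP [&& r == k & (s == i) && (t == j) || (s == j) && (t == i)].
  case: hc => [nc|ne].
    by apply: nc; split => //; case/orP: hst => /andP [/eqP -> /eqP ->]; [left|right].
  apply: ne; apply/eqP; rewrite eq_sym -subr_eq0 -(intr_eq0 CC) -e.
  by case/orP: hst => /andP [/eqP -> /eqP ->]; rewrite er cv1 subrr.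
case: (ltngtP s t) => [lt|lt|eq] //.
  apply: (cv2 r s t) => //; last by exists (zat z r t - zat z r s).
  by case=> er [es et]; move: hnc; subst; rewrite !eqxx.
apply: (cv2 r t s) => //; last by rewrite -opprB; apply: is_intN; exists (zat z r t - zat z r s).
by case=> er [es et]; move: hnc; subst; rewrite !eqxx orbT.
Qed.

Definition Bfrac (f : Frac n) := exists g h, Bden h /\ toF h * f = toF g.

Lemma Bfrac_inB f : Bfrac f -> inB k i j f.
Proof.
case=> g [h [gh e]].
have hf : f = toF g / toF h by rewrite -e mulrAC mulfV ?mul1r // Bden_toF_neq0.
by split; exists g, h; split => //; apply: Bden_Aden.
Qed.

Lemma inB_Bfrac f : inB k i j f -> Bfrac f.
Proof.
case=> _ [g [h [gh e]]]; exists g, h; split => //.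
by rewrite e mulrC mulfVK // Bden_toF_neq0.
Qed.

Lemma Bfrac_poly g : Bfrac (toF g).
Proof.
exists g, 1; split; last by rewrite /toF rmorph1 mul1r.
by move=> v _; rewrite /evalP meval1 oner_eq0.
Qed.

Lemma Bfrac_add f1 f2 : Bfrac f1 -> Bfrac f2 -> Bfrac (f1 + f2).
Proof.
case=> g1 [h1 [gh1 e1]] [g2 [h2 [gh2 e2]]].
exists (g1 * h2 + g2 * h1), (h1 * h2); split; first exact: BdenM.
rewrite /toF !rmorphD !rmorphM /= -!/(toF _) -e1 -e2; ring.
Qed.

Lemma Bfrac_mul f1 f2 : Bfrac f1 -> Bfrac f2 -> Bfrac (f1 * f2).
Proof.
case=> g1 [h1 [gh1 e1]] [g2 [h2 [gh2 e2]]].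
exists (g1 * g2), (h1 * h2); split; first exact: BdenM.
rewrite /toF !rmorphM /= -!/(toF _) -e1 -e2; ring.
Qed.

Lemma Bfrac_int (m : int) : Bfrac m%:~R.
Proof. by have := Bfrac_poly m%:~R; rewrite /toF rmorph_int. Qed.

Lemma Bfrac_nat m : Bfrac m%:R.
Proof. by have := Bfrac_int m; rewrite -pmulrn. Qed.

Lemma Bfrac_opp f : Bfrac f -> Bfrac (- f).
Proof. by move=> h; rewrite -mulN1r; apply: Bfrac_mul => //; have := Bfrac_int (-1). Qed.

Lemma Bfrac_sub f1 f2 : Bfrac f1 -> Bfrac f2 -> Bfrac (f1 - f2).
Proof. by move=> h1 h2; apply: Bfrac_add => //; apply: Bfrac_opp. Qed.

Lemma Bfrac_div f h : Bfrac f -> Bden h -> Bfrac (f / toF h).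
Proof.
case=> g [h1 [gh1 e1]] gh; exists g, (h1 * h); split; first exact: BdenM.
have hn := Bden_toF_neq0 gh.
by rewrite /toF rmorphM /= -!/(toF _) -e1 -mulrA [toF h * _]mulrC mulfVK.
Qed.

Lemma Bfrac_prod (I : Type) (r : seq I) (P : pred I) (F : I -> Frac n) :
  (forall x, P x -> Bfrac (F x)) -> Bfrac (\prod_(x <- r | P x) F x).
Proof. by move=> h; apply: big_ind => //; [exact: Bfrac_nat 1 | exact: Bfrac_mul]. Qed.

Lemma Bfrac_sum (I : Type) (r : seq I) (P : pred I) (F : I -> Frac n) :
  (forall x, P x -> Bfrac (F x)) -> Bfrac (\sum_(x <- r | P x) F x).
Proof. by move=> h; apply: big_ind => //; [exact: Bfrac_nat 0 | exact: Bfrac_add]. Qed.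

Lemma Bfrac_lamz z r s : Bfrac (lamz z r s).
Proof. by rewrite -toF_lamz_poly; apply: Bfrac_poly. Qed.

Lemma Bfrac_lam r s : Bfrac (lam n r s).
Proof.
by rewrite /lam; case: (mkpos n r s) => [p|]; [exact: Bfrac_poly | exact: Bfrac_nat 0].
Qed.

End Denominators.

Section Coefficients.
Variables (n k i j : nat).
Hypotheses (hij : (i < j)%N) (hjk : (j <= k)%N) (hkn : (k.+1 < n)%N).
Local Notation tau := (tau k i j).
Local Notation Bfrac := (@Bfrac n k i j).
Local Notation Bden := (@Bden n k i j).

(* [p^+_{r,s}] and [p^-_{r,s}] at [lambda^z] are [lin_prod z r r' m s] with [r' = r +- 1] *)
Definition lin_prod (z : Zvec n) r r' m s : Frac n := \prod_(t < m) (lamz z r s - lamz z r' t).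

Definition xy_diff : Frac n := lam n k i - lam n k j.

(* what makes the terms [al T(z') +- be T(tau z')] of [E S(z)] and [E A(z)] B-combinations of
   [S(z')] and [A(z')] *)
Definition Bpair (z : Zvec n) (al be : Frac n) :=
  [/\ Bfrac (al + be), Bfrac ((al - be) * xy_diff) &
      (zat z k i <> zat z k j -> exists2 g, Bfrac g & al - be = xy_diff * g)].

Lemma lamz_tau_other (z : Zvec n) r s : (r != k) || ((s != i) && (s != j)) ->
  lamz (tau z) r s = lamz z r s.
Proof.
move=> h; rewrite /lamz zat_tau //.
by case: (r =P k) h => [->|] //= h; case: (s =P i) h => //= _; case: (s =P j).
Qed.

Lemma lamz_tau_i (z : Zvec n) : lamz (tau z) k i = lamz z k i - (zat z k i)%:~R + (zat z k j)%:~R.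
Proof. by rewrite /lamz zat_tau // !eqxx addrK. Qed.

Lemma lamz_tau_j (z : Zvec n) : lamz (tau z) k j = lamz z k j - (zat z k j)%:~R + (zat z k i)%:~R.
Proof.
have ji : (j == i) = false by apply/eqP; lia.
by rewrite /lamz zat_tau // eqxx ji eqxx addrK.
Qed.

Lemma lin_prod_tau (z : Zvec n) r r' m s : (r != k) || ((s != i) && (s != j)) -> r' != k ->
  lin_prod (tau z) r r' m s = lin_prod z r r' m s.
Proof. by move=> h1 h2; apply: eq_bigr => t _; rewrite !lamz_tau_other // h2. Qed.

Lemma qq_tau (z : Zvec n) r s : r != k -> qq (tau z) r s = qq z r s.
Proof. by move=> h; apply: eq_bigr => t _; rewrite !lamz_tau_other // h. Qed.

Lemma critical_prod_tau (z : Zvec n) u :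
  (u - lamz (tau z) k i) * (u - lamz (tau z) k j) =
  (u - lamz z k i) * (u - lamz z k j) + xy_diff * ((zat z k i)%:~R - (zat z k j)%:~R).
Proof. by rewrite lamz_tau_i lamz_tau_j /xy_diff /lamz; ring. Qed.

Definition qq_poly (z : Zvec n) r s : Pol n :=
  \prod_(t < r.+1 | val t != s) (lamz_poly z r s - lamz_poly z r t).

Lemma toF_qq_poly (z : Zvec n) r s : toF (qq_poly z r s) = qq z r s.
Proof.
rewrite /toF /qq_poly rmorph_prod; apply: eq_bigr => t _.
by rewrite rmorphB /= -!/(toF _) !toF_lamz_poly.
Qed.

Lemma Bden_qq_poly (z : Zvec n) r s : (r.+1 < n)%N -> (s <= r)%N ->
  (r != k) || ((s != i) && (s != j)) || (zat z k i != zat z k j) -> Bden (qq_poly z r s).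
Proof.
move=> hr hs hc; apply: Bden_prod => -[t ht'] /= ht.
apply: Bden_lamz_diff => //; first by move=> e; rewrite e eqxx in ht.
have [hb|hb] := boolP ((r == k) && (((s == i) && (t == j)) || ((s == j) && (t == i)))).
  right; case/andP: hb => /eqP er /orP [] /andP [/eqP es /eqP et]; subst;
  by move: hc; rewrite !eqxx /= ?andbF ?orbF => /eqP ne ?; apply: ne.
by left; case=> er [[es et]|[es et]]; move: hb; rewrite er es et !eqxx ?orbT.
Qed.

Lemma qq_neq0 (z : Zvec n) r s : (r.+1 < n)%N -> (s <= r)%N ->
  (r != k) || ((s != i) && (s != j)) || (zat z k i != zat z k j) -> qq z r s != 0.
Proof. by move=> *; rewrite -toF_qq_poly; apply: (@Bden_toF_neq0 n k i j); apply: Bden_qq_poly. Qed.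

Lemma Bfrac_div_qq f (z : Zvec n) r s : (r.+1 < n)%N -> (s <= r)%N ->
  (r != k) || ((s != i) && (s != j)) || (zat z k i != zat z k j) ->
  Bfrac f -> Bfrac (f / qq z r s).
Proof. by move=> *; rewrite -toF_qq_poly; apply: Bfrac_div => //; apply: Bden_qq_poly. Qed.

Lemma Bfrac_lin_prod (z : Zvec n) r r' m s : Bfrac (lin_prod z r r' m s).
Proof. by apply: Bfrac_prod => t _; apply: Bfrac_sub; apply: Bfrac_lamz. Qed.

Lemma xy_diff_neq0 : xy_diff != 0.
Proof.
have hik : (i <= k)%N by lia.
have := Aden_toF_neq0 (@Aden_lamz_diff n 0 k i j hkn hik hjk _).
rewrite /toF rmorphB /= -!/(toF _) !toF_lamz_poly /lamz /zat.
have [p ->] := @mkpos_exists n k i hik (ltnW hkn).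
have [q ->] := @mkpos_exists n k j hjk (ltnW hkn).
rewrite !ffunE !addr0; apply; lia.
Qed.

Lemma Bfrac_xy_diff : Bfrac xy_diff.
Proof. by apply: Bfrac_sub; apply: Bfrac_lam. Qed.

Lemma Bpair_of (z : Zvec n) al be g : Bfrac al -> Bfrac be -> Bfrac g ->
  al - be = xy_diff * g -> Bpair z al be.
Proof.
move=> ha hb hg e; split; [exact: Bfrac_add | | by exists g].
by rewrite e; do 2?apply: Bfrac_mul => //; apply: Bfrac_xy_diff.
Qed.

Lemma Bpair_same (z : Zvec n) al : Bfrac al -> Bpair z al al.
Proof. by move=> h; apply: (Bpair_of z h h (@Bfrac_nat n k i j 0)); rewrite subrr mulr0. Qed.

Lemma Bpair_sym (z : Zvec n) al be : Bpair (tau z) be al -> Bpair z al be.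
Proof.
have ji : (j == i) = false by apply/eqP; lia.
case=> h1 h2 h3; split; first by rewrite addrC.
  by rewrite -opprB mulNr; apply: Bfrac_opp.
move=> hz; have [|g hg e] := h3; first by rewrite !zat_tau // !eqxx ji /=; move/esym.
by exists (- g); [apply: Bfrac_opp | rewrite -opprB e mulrN].
Qed.

End Coefficients.

Section CoefficientCases.
Variables (n k i j : nat).
Hypotheses (hij : (i < j)%N) (hjk : (j <= k)%N) (hkn : (k.+1 < n)%N).
Local Notation tau := (tau k i j).
Local Notation Bfrac := (@Bfrac n k i j).
Local Notation Bden := (@Bden n k i j).
Local Notation Bpair := (@Bpair n k i j).
Local Notation lin_prod := (@lin_prod n).
Local Notation xy_diff := (xy_diff n k i j).
Local Notation zdiff z := ((zat z k i)%:~R - (zat z k j)%:~R : Frac n).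

Let hik : (i < k.+1)%N. Proof. lia. Qed.
Let hjk' : (j < k.+1)%N. Proof. lia. Qed.
Let ji : (j == i) = false. Proof. by apply/eqP; lia. Qed.

Lemma Bfrac_divided_difference (I : Type) (r : seq I) (P : pred I) (h : I -> Frac n) X Y :
  Bfrac X -> Bfrac Y -> (forall t, Bfrac (h t)) ->
  exists2 D, Bfrac D & \prod_(t <- r | P t) (X - h t) - \prod_(t <- r | P t) (Y - h t) = (X - Y) * D.
Proof.
move=> hX hY hh; elim: r => [|t r [D hD e]].
  by exists 0; [exact: Bfrac_nat 0 | rewrite !big_nil subrr mulr0].
rewrite !big_cons; case: (P t); last by exists D.
exists ((X - h t) * D + \prod_(t <- r | P t) (Y - h t)).
  apply: Bfrac_add; first by apply: Bfrac_mul => //; apply: Bfrac_sub.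
  by apply: Bfrac_prod => x _; apply: Bfrac_sub.
by rewrite -[\prod_(_ <- _ | _) (X - _)](subrK (\prod_(t <- r | P t) (Y - h t))) e; ring.
Qed.

Lemma prod_row_k_critical (z : Zvec n) (P : pred nat) u : P i -> P j ->
  \prod_(t < k.+1 | P t) (u - lamz z k t) = (u - lamz z k i) * (u - lamz z k j) *
    \prod_(t < k.+1 | P t && (t != i :> nat) && (t != j :> nat)) (u - lamz z k t).
Proof.
pose F t := u - lamz z k t.
move=> Pi Pj; rewrite (@bigD1_ord_nat _ _ _ _ P F i hik Pi).
rewrite (@bigD1_ord_nat _ _ _ _ (fun t => P t && (t != i)) F j hjk') /=; last by rewrite Pj ji.
by rewrite mulrA.
Qed.

Lemma prod_row_k_rest_tau (z : Zvec n) (P : pred nat) u :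
  \prod_(t < k.+1 | P t && (t != i :> nat) && (t != j :> nat)) (u - lamz (tau z) k t) =
  \prod_(t < k.+1 | P t && (t != i :> nat) && (t != j :> nat)) (u - lamz z k t).
Proof.
by apply: eq_bigr => t /andP [/andP [_ ti] tj]; rewrite lamz_tau_other // ti tj orbT.
Qed.

Lemma Bpair_off_k (z : Zvec n) r r' m s : (r.+1 < n)%N -> (s <= r)%N -> r != k -> r' != k ->
  Bpair z (lin_prod z r r' m s / qq z r s) (lin_prod (tau z) r r' m s / qq (tau z) r s).
Proof.
move=> hr hs nk nk'; rewrite lin_prod_tau ?nk // qq_tau //; apply: Bpair_same.
by apply: Bfrac_div_qq; rewrite ?nk //; apply: Bfrac_lin_prod.
Qed.

Lemma Bpair_next_row_k (z : Zvec n) r s : (r.+1 < n)%N -> (s <= r)%N -> r != k ->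
  Bpair z (lin_prod z r k k.+1 s / qq z r s) (lin_prod (tau z) r k k.+1 s / qq (tau z) r s).
Proof.
move=> hr hs nk; have rk : (r != k) || ((s != i) && (s != j)) by rewrite nk.
set R := \prod_(t < k.+1 | true && (t != i :> nat) && (t != j :> nat)) (lamz z r s - lamz z k t).
have hR : Bfrac R by apply: Bfrac_prod => t _; apply: Bfrac_sub; apply: Bfrac_lamz.
apply: (Bpair_of z _ _ (g := - (zdiff z * R) / qq z r s)).
- by apply: Bfrac_div_qq; rewrite ?nk //; apply: Bfrac_lin_prod.
- by apply: Bfrac_div_qq; rewrite ?nk //; apply: Bfrac_lin_prod.
- apply: Bfrac_div_qq; rewrite ?nk //; apply: Bfrac_opp; apply: Bfrac_mul => //.
  by apply: Bfrac_sub; apply: Bfrac_int.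
rewrite qq_tau // -mulrBl /lin_prod !(@prod_row_k_critical _ predT) //.
rewrite lamz_tau_other // prod_row_k_rest_tau // critical_prod_tau // -/R; ring.
Qed.

Lemma Bpair_row_k_other (z : Zvec n) r' m s : (s <= k)%N -> s != i -> s != j -> r' != k ->
  Bpair z (lin_prod z k r' m s / qq z k s) (lin_prod (tau z) k r' m s / qq (tau z) k s).
Proof.
move=> hs si sj nk; have ks : (k != k) || ((s != i) && (s != j)) by rewrite si sj orbT.
set H := \prod_(t < k.+1 | (t != s :> nat) && (t != i :> nat) && (t != j :> nat))
  (lamz z k s - lamz z k t).
have hH : Bfrac H by apply: Bfrac_prod => t _; apply: Bfrac_sub; apply: Bfrac_lamz.
have Bq : forall z' f, Bfrac f -> Bfrac (f / qq z' k s).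
  by move=> z' f hf; apply: Bfrac_div_qq => //; rewrite ks.
have qq_split : forall z' : Zvec n, qq z' k s =
    (lamz z' k s - lamz z' k i) * (lamz z' k s - lamz z' k j) *
    \prod_(t < k.+1 | (t != s :> nat) && (t != i :> nat) && (t != j :> nat))
      (lamz z' k s - lamz z' k t).
  by move=> z'; rewrite -(@prod_row_k_critical z' (fun t => t != s)) // eq_sym.
have q0 : qq z k s != 0 by apply: (@qq_neq0 n k i j); rewrite ?ks.
have q0' : qq (tau z) k s != 0 by apply: (@qq_neq0 n k i j); rewrite ?ks.
set P := lin_prod z k r' m s.
apply: (Bpair_of z _ _ (g := P * (zdiff z * H) / qq z k s / qq (tau z) k s)).
- by apply: (Bq); apply: Bfrac_lin_prod.
- by apply: (Bq); apply: Bfrac_lin_prod.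
- apply: (Bq); apply: (Bq); apply: Bfrac_mul; first exact: Bfrac_lin_prod.
  by apply: Bfrac_mul => //; apply: Bfrac_sub; apply: Bfrac_int.
have dq : qq (tau z) k s - qq z k s = xy_diff * (zdiff z * H).
  rewrite !qq_split lamz_tau_other // (@prod_row_k_rest_tau z (fun t => t != s)) //.
  by rewrite critical_prod_tau // -/H; ring.
have eP : lin_prod (tau z) k r' m s = P by apply: lin_prod_tau.
by rewrite eP (div_sub_div P q0 q0') dq !mulrA [P * xy_diff]mulrC.
Qed.

End CoefficientCases.

Section CriticalCoefficients.
Variables (n k i j : nat).
Hypotheses (hij : (i < j)%N) (hjk : (j <= k)%N) (hkn : (k.+1 < n)%N).
Local Notation tau := (tau k i j).
Local Notation Bfrac := (@Bfrac n k i j).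
Local Notation Bden := (@Bden n k i j).
Local Notation Bpair := (@Bpair n k i j).
Local Notation lin_prod := (@lin_prod n).
Local Notation xy_diff := (xy_diff n k i j).
Local Notation zdiff z := ((zat z k i)%:~R - (zat z k j)%:~R : Frac n).

Let hik : (i < k.+1)%N. Proof. lia. Qed.
Let hjk' : (j < k.+1)%N. Proof. lia. Qed.
Let ji : (j == i) = false. Proof. by apply/eqP; lia. Qed.

Definition rest_prod (z : Zvec n) u :=
  \prod_(t < k.+1 | (t != i :> nat) && (t != j :> nat)) (u - lamz z k t).

Lemma rest_prod_tau (z : Zvec n) u : rest_prod (tau z) u = rest_prod z u.
Proof. by apply: eq_bigr => t /andP [ti tj]; rewrite lamz_tau_other // ti tj orbT. Qed.

Lemma Bden_rest_prod_poly (z : Zvec n) s : s = i \/ s = j ->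
  Bden (\prod_(t < k.+1 | (t != i :> nat) && (t != j :> nat)) (lamz_poly z k s - lamz_poly z k t)).
Proof.
move=> hs; apply: Bden_prod => -[t ht] /andP [/= /eqP ti /eqP tj].
have [hsk st] : (s <= k)%N /\ s <> t by case: hs => [->|->]; split; lia.
apply: Bden_lamz_diff => //.
by left; case=> _ [] [_ et].
Qed.

Lemma toF_rest_prod_poly (z : Zvec n) s :
  toF (\prod_(t < k.+1 | (t != i :> nat) && (t != j :> nat)) (lamz_poly z k s - lamz_poly z k t)) =
  rest_prod z (lamz z k s).
Proof.
rewrite /toF rmorph_prod; apply: eq_bigr => t _.
by rewrite rmorphB /= -!/(toF _) !toF_lamz_poly.
Qed.

Lemma rest_prod_neq0 (z : Zvec n) s : s = i \/ s = j -> rest_prod z (lamz z k s) != 0.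
Proof. by move=> hs; rewrite -toF_rest_prod_poly (Bden_toF_neq0 (Bden_rest_prod_poly _ hs)). Qed.

Lemma Bfrac_div_rest_prod (z : Zvec n) s f : s = i \/ s = j ->
  Bfrac f -> Bfrac (f / rest_prod z (lamz z k s)).
Proof. by move=> hs hf; rewrite -toF_rest_prod_poly; apply: Bfrac_div => //; apply: Bden_rest_prod_poly. Qed.

Lemma qq_k_i (z : Zvec n) : qq z k i = (xy_diff + zdiff z) * rest_prod z (lamz z k i).
Proof.
pose F t := lamz z k i - lamz z k t.
rewrite /qq (@bigD1_ord_nat _ _ _ _ (fun t => t != i) F j hjk') /=; last by rewrite ji.
by congr (_ * _); rewrite /F /lamz /xy_diff; ring.
Qed.

Lemma qq_tau_k_j (z : Zvec n) :
  qq (tau z) k j = (zdiff z - xy_diff) * rest_prod z (lamz (tau z) k j).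
Proof.
pose F t := lamz (tau z) k j - lamz (tau z) k t.
rewrite /qq (@bigD1_ord_nat _ _ _ _ (fun t => t != j) F i hik) /=; last by rewrite eq_sym ji.
congr (_ * _); first by rewrite /F lamz_tau_i // lamz_tau_j // /lamz /xy_diff; ring.
by rewrite -(rest_prod_tau z); apply: eq_bigl => t; rewrite andbC.
Qed.

Lemma Bpair_critical_factored (z : Zvec n) FX FY DF DG :
  let GX := rest_prod z (lamz z k i) in let GY := rest_prod z (lamz (tau z) k j) in
  Bfrac FX -> Bfrac FY -> Bfrac DF -> Bfrac DG ->
  FX - FY = xy_diff * DF -> GX - GY = xy_diff * DG ->
  Bpair z (FX / ((xy_diff + zdiff z) * GX)) (FY / ((zdiff z - xy_diff) * GY)).
Proof.
move=> GX GY hFX hFY hDF hDG eF eG.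
have e0 := xy_diff_neq0 hij hjk hkn.
have GX0 : GX != 0 by apply: rest_prod_neq0; left.
have GY0 : GY != 0 by rewrite /GY -rest_prod_tau; apply: rest_prod_neq0; right.
have divX f : Bfrac f -> Bfrac (f / GX) by apply: Bfrac_div_rest_prod; left.
have divY f : Bfrac f -> Bfrac (f / GY).
  by rewrite /GY -rest_prod_tau; apply: Bfrac_div_rest_prod; right.
have hGX : Bfrac GX by apply: Bfrac_prod => t _; apply: Bfrac_sub; apply: Bfrac_lamz.
have hGY : Bfrac GY by apply: Bfrac_prod => t _; apply: Bfrac_sub; apply: Bfrac_lamz.
have [tied|untied] := eqVneq (zat z k i) (zat z k j).
  rewrite tied subrr addr0 sub0r; split; last by [].
  - by rewrite (tied_sum eF eG e0 GX0 GY0); apply: divY; apply: divX; apply: Bfrac_sub; apply: Bfrac_mul.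
  - by rewrite (tied_diff _ _ e0 GX0 GY0); apply: Bfrac_add; [apply: divX | apply: divY].
have zt : zat (tau z) k i != zat (tau z) k j by rewrite !zat_tau // !eqxx ji /= eq_sym.
have qX : Bden (qq_poly z k i) by apply: Bden_qq_poly; rewrite ?untied ?orbT.
have qY : Bden (qq_poly (tau z) k j) by apply: Bden_qq_poly; rewrite ?zt ?orbT.
have qX0 : (xy_diff + zdiff z) * GX != 0 by rewrite /GX -qq_k_i -toF_qq_poly; apply: Bden_toF_neq0 qX.
have qY0 : (zdiff z - xy_diff) * GY != 0 by rewrite /GY -qq_tau_k_j -toF_qq_poly; apply: Bden_toF_neq0 qY.
have divqX f : Bfrac f -> Bfrac (f / ((xy_diff + zdiff z) * GX)).
  by rewrite /GX -qq_k_i -toF_qq_poly => hf; apply: Bfrac_div.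
have divqY f : Bfrac f -> Bfrac (f / ((zdiff z - xy_diff) * GY)).
  by rewrite /GY -qq_tau_k_j -toF_qq_poly => hf; apply: Bfrac_div.
apply: (Bpair_of z (divqX _ hFX) (divqY _ hFY) _ (untied_diff eF eG qX0 qY0)).
apply: divqY; apply: divqX; apply: Bfrac_sub; last by apply: Bfrac_add; apply: Bfrac_mul.
apply: Bfrac_mul; first by apply: Bfrac_sub; apply: Bfrac_int.
by apply: Bfrac_sub; apply: Bfrac_mul.
Qed.

Lemma Bpair_critical (z : Zvec n) r' m : r' != k ->
  Bpair z (lin_prod z k r' m i / qq z k i) (lin_prod (tau z) k r' m j / qq (tau z) k j).
Proof.
move=> nk; rewrite qq_k_i qq_tau_k_j.
have eFY : lin_prod (tau z) k r' m j = \prod_(t < m) (lamz (tau z) k j - lamz z r' t).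
  by apply: eq_bigr => t _; rewrite (lamz_tau_other hij hjk hkn z (r := r')) // nk.
have eXY : lamz z k i - lamz (tau z) k j = xy_diff.
  by rewrite lamz_tau_j // /lamz /xy_diff; ring.
have hX := Bfrac_lamz k i j z k i; have hY := Bfrac_lamz k i j (tau z) k j.
have [DF hDF eF] := Bfrac_divided_difference (index_enum 'I_m) predT hX hY
  (fun t : 'I_m => Bfrac_lamz k i j z r' t).
have [DG hDG eG] := Bfrac_divided_difference (index_enum 'I_k.+1)
  (fun t : 'I_k.+1 => (t != i :> nat) && (t != j :> nat)) hX hY
  (fun t : 'I_k.+1 => Bfrac_lamz k i j z k t).
rewrite eXY in eF eG; rewrite eFY.
apply: Bpair_critical_factored; [exact: Bfrac_lin_prod | | exact: hDF | exact: hDG | exact: eF | exact: eG].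
by apply: Bfrac_prod => t _; apply: Bfrac_sub; apply: Bfrac_lamz.
Qed.

Lemma Bpair_coef (z : Zvec n) r r' m s : (r.+1 < n)%N -> (s <= r)%N ->
  (r = k -> r' != k) -> (r != k -> r' = k -> m = k.+1) ->
  Bpair z (lin_prod z r r' m s / qq z r s)
    (lin_prod (tau z) r r' m (swap_col k i j r s) / qq (tau z) r (swap_col k i j r s)).
Proof.
move=> hr hs hk hk'; rewrite /swap_col.
have [er|nk] := eqVneq r k => /=.
  have nk := hk er; move: hs; rewrite er => hs.
  have [->|si] := eqVneq s i => /=; first exact: Bpair_critical.
  have [->|sj] := eqVneq s j => /=; last exact: Bpair_row_k_other.
  by apply: Bpair_sym; have := @Bpair_critical (tau z) r' m nk; rewrite (tauK hij hjk hkn).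
have [er'|nk'] := eqVneq r' k; last exact: Bpair_off_k.
by rewrite er' (hk' nk er'); apply: Bpair_next_row_k.
Qed.

End CriticalCoefficients.

Section Vectors.
Variables (n k i j : nat).
Hypotheses (hij : (i < j)%N) (hjk : (j <= k)%N) (hkn : (k.+1 < n)%N).
Local Notation tau := (tau k i j).
Local Notation Bfrac := (@Bfrac n k i j).
Local Notation Bpair := (@Bpair n k i j).
Local Notation xy_diff := (xy_diff n k i j).
Local Notation swap_col := (swap_col k i j).

Definition SA_comb (g : Zvec n * Frac n * Frac n) : vec n :=
  fun z' => g.1.2 * Svec k i j g.1.1 z' + g.2 * Avec k i j g.1.1 z'.

Definition SA_comb_ok (g : Zvec n * Frac n * Frac n) := [/\ inZ0 g.1.1, Bfrac g.1.2 & Bfrac g.2].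

Definition inVBs (w : vec n) := exists l : seq (Zvec n * Frac n * Frac n),
  (forall g, g \in l -> SA_comb_ok g) /\ forall z', w z' = \sum_(g <- l) SA_comb g z'.

Lemma inVBs_ext (w1 w2 : vec n) : (forall z', w1 z' = w2 z') -> inVBs w1 -> inVBs w2.
Proof. by move=> e [l [h1 h2]]; exists l; split => // z'; rewrite -e. Qed.

Lemma inVBs0 : inVBs (fun _ => 0).
Proof. by exists [::]; split => // z'; rewrite big_nil. Qed.

Lemma inVBs_add (w1 w2 : vec n) : inVBs w1 -> inVBs w2 -> inVBs (fun z' => w1 z' + w2 z').
Proof.
move=> [l1 [h1 e1]] [l2 [h2 e2]]; exists (l1 ++ l2); split.
  by move=> g; rewrite mem_cat => /orP [/h1|/h2].
by move=> z'; rewrite big_cat e1 e2.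
Qed.

Lemma inVBs_comb g : SA_comb_ok g -> inVBs (SA_comb g).
Proof.
move=> h; exists [:: g]; split => [g'|z']; last by rewrite big_seq1.
by rewrite inE => /eqP ->.
Qed.

Lemma inVBs_scale c (w : vec n) : Bfrac c -> inVBs w -> inVBs (fun z' => c * w z').
Proof.
move=> hc [l [h1 e1]]; exists [seq (g.1.1, c * g.1.2, c * g.2) | g <- l]; split.
  by move=> g /mapP [g' /h1 [? ? ?] ->]; split => //=; apply: Bfrac_mul.
move=> z'; rewrite e1 big_map big_distrr; apply: eq_bigr => g _; rewrite /SA_comb /=; ring.
Qed.

Lemma inVBs_sum (I : eqType) (r : seq I) (F : I -> vec n) :
  (forall x, x \in r -> inVBs (F x)) -> inVBs (fun z' => \sum_(x <- r) F x z').
Proof.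
elim: r => [|x r IH] h; first by apply: inVBs_ext inVBs0 => z'; rewrite big_nil.
apply: inVBs_ext (inVBs_add (h x (mem_head _ _)) (IH _)) => [z'|]; first by rewrite big_cons.
by move=> y hy; apply: h; rewrite inE hy orbT.
Qed.

Lemma inVBsP (w : vec n) : inVBs w <-> inVB k i j w.
Proof.
split=> [[l [h1 e1]] | [m [zs [b [b' [h1 e1]]]]]].
  pose g0 : Zvec n * Frac n * Frac n := ([ffun=> 0], 0, 0).
  exists (size l), (fun t => (nth g0 l t).1.1), (fun t => (nth g0 l t).1.2),
    (fun t => (nth g0 l t).2); split => [t|z']; last by rewrite e1 (big_nth g0) big_mkord.
  have /h1 [? ? ?] : nth g0 l t \in l by rewrite mem_nth.
  by split => //; split; apply: Bfrac_inB.
exists [seq (zs t, b t, b' t) | t <- enum 'I_m]; split => [g /mapP [t _ ->]|z'].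
  by have [? [? ?]] := h1 t; split => //; apply: inB_Bfrac.
by rewrite e1 big_map big_enum.
Qed.

(* [E_{r+1,r+2}] is [- Eop r (-1) p^+] and [E_{r+2,r+1}] is [Eop r 1 p^-] *)
Definition Eop r (d : int) (P : Zvec n -> nat -> Frac n) (w : vec n) : vec n := fun z' =>
  \sum_(s < r.+1) (P (shift z' r s d) s / qq (shift z' r s d) r s) * w (shift z' r s d).

Lemma eq_Eop r d P (w1 w2 : vec n) z' : (forall z, w1 z = w2 z) ->
  Eop r d P w1 z' = Eop r d P w2 z'.
Proof. by move=> e; apply: eq_bigr => s _; rewrite e. Qed.

Lemma Eop_lin r d P a b (w1 w2 : vec n) z' :
  Eop r d P (fun z => a * w1 z + b * w2 z) z' = a * Eop r d P w1 z' + b * Eop r d P w2 z'.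
Proof. by rewrite /Eop !big_distrr -big_split; apply: eq_bigr => s _ /=; ring. Qed.

Lemma Eop_sum r d P (I : Type) (l : seq I) (F : I -> vec n) z' :
  Eop r d P (fun z => \sum_(x <- l) F x z) z' = \sum_(x <- l) Eop r d P (F x) z'.
Proof. by rewrite /Eop; under eq_bigr => s _ do rewrite big_distrr; rewrite exchange_big. Qed.

Lemma Eop_T r d P (z z' : Zvec n) : Eop r d P (T z) z' =
  \sum_(s < r.+1) (P z s / qq z r s) * T (shift z r s (- d)) z'.
Proof.
apply: eq_bigr => s _; rewrite /T shift_eqE.
by case: eqP => [->|_]; rewrite ?shiftNK ?mulr0.
Qed.

Lemma swap_col_ord r (s : 'I_r.+1) : (swap_col r s < r.+1)%N.
Proof. by rewrite ltnS (swap_col_le hij hjk hkn) // -ltnS ltn_ord. Qed.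

(* reindexing the [T(tau z)] part by [swap_col r] pairs it termwise with the [T(z)] part *)
Lemma Eop_pair r d P (z z' : Zvec n) a b : (r < n)%N ->
  Eop r d P (fun z'' => a * T z z'' + b * T (tau z) z'') z' =
  \sum_(s < r.+1) (a * (P z s / qq z r s * T (shift z r s (- d)) z') +
     b * (P (tau z) (swap_col r s) / qq (tau z) r (swap_col r s) *
          T (tau (shift z r s (- d))) z')).
Proof.
move=> hr.
have sinj : injective (fun s : 'I_r.+1 => inord (swap_col r s) : 'I_r.+1).
  apply: (can_inj (g := fun s : 'I_r.+1 => inord (swap_col r s))) => s; apply: val_inj.
  by rewrite /= !inordK ?(swap_colK hij hjk hkn) ?swap_col_ord // -[X in (X < _)%N](inordK (swap_col_ord s)) swap_col_ord.
rewrite Eop_lin !Eop_T [X in _ + b * X](reindex_inj sinj) /= !big_distrr -big_split /=.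
by apply: eq_bigr => s _; rewrite inordK ?swap_col_ord // (tau_shift hij hjk hkn) // -ltnS ltn_ord.
Qed.

Lemma two_neq0 : (2%:R : Frac n) != 0.
Proof.
have -> : (2%:R : Frac n) = toF 2%:R by rewrite /toF rmorph_nat.
by apply: Aden_toF_neq0 => v _; rewrite /evalP rmorph_nat pnatr_eq0.
Qed.

Lemma Bfrac_half f : Bfrac f -> Bfrac (f / 2%:R).
Proof.
have -> : (2%:R : Frac n) = toF 2%:R by rewrite /toF rmorph_nat.
move=> hf.
by apply: Bfrac_div => // v _; rewrite /evalP rmorph_nat pnatr_eq0.
Qed.

Lemma inZ0_shift (z : Zvec n) r s c : (r.+1 < n)%N -> (s <= r)%N -> inZ0 z -> inZ0 (shift z r s c).
Proof. by move=> hr hs hz s' hs'; rewrite zat_shift ?hz ?add0r //; [case: eqP => //; lia | lia]. Qed.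

Definition Bpair_for r P := forall (z : Zvec n) s, (s <= r)%N ->
  Bpair z (P z s / qq z r s) (P (tau z) (swap_col r s) / qq (tau z) r (swap_col r s)).

Lemma inVBs_Eop_S r d P (z : Zvec n) : (r.+1 < n)%N -> inZ0 z -> Bpair_for r P ->
  inVBs (Eop r d P (Svec k i j z)).
Proof.
move=> hr hz hP.
apply: (inVBs_ext (w1 := fun z' => \sum_(s < r.+1)
    (2%:R^-1 * (P z s / qq z r s * T (shift z r s (- d)) z') +
     2%:R^-1 * (P (tau z) (swap_col r s) / qq (tau z) r (swap_col r s) *
       T (tau (shift z r s (- d))) z')))).
  move=> z'; rewrite -Eop_pair; last lia.
  by apply: eq_Eop => z''; rewrite /Svec -mulrDr mulrC.
apply: inVBs_sum => s _; have hs : (s <= r)%N by rewrite -ltnS ltn_ord.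
have [h1 h2 _] := hP z s hs.
set al := P z s / _; set be := P (tau z) _ / _.
apply: (inVBs_ext (w1 := SA_comb (shift z r s (- d), (al + be) / 2%:R, (al - be) * xy_diff / 2%:R))).
  move=> z'; rewrite -mulrDr (recombine_S _ _ _ _ (xy_diff_neq0 hij hjk hkn) two_neq0).
  by rewrite /SA_comb /Svec /Avec.
by apply: inVBs_comb; split => /=; [exact: inZ0_shift | exact: Bfrac_half | exact: Bfrac_half].
Qed.

Lemma inVBs_Eop_A r d P (z : Zvec n) : (r.+1 < n)%N -> inZ0 z -> Bpair_for r P ->
  inVBs (Eop r d P (Avec k i j z)).
Proof.
move=> hr hz hP.
have [tied|untied] := eqVneq (zat z k i) (zat z k j).
  apply: (inVBs_ext (w1 := fun _ => 0)) inVBs0 => z'; symmetry.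
  by apply: big1 => s _; rewrite /Avec (tau_id hij hjk hkn tied) subrr mul0r mulr0.
pose c := (2%:R * xy_diff)^-1.
apply: (inVBs_ext (w1 := fun z' => \sum_(s < r.+1)
    (c * (P z s / qq z r s * T (shift z r s (- d)) z') +
     (- c) * (P (tau z) (swap_col r s) / qq (tau z) r (swap_col r s) *
       T (tau (shift z r s (- d))) z')))).
  move=> z'; rewrite -Eop_pair; last lia.
  by apply: eq_Eop => z''; rewrite /Avec /c; ring.
apply: inVBs_sum => s _; have hs : (s <= r)%N by rewrite -ltnS ltn_ord.
have [h1 h2 h3] := hP z s hs; have [g hg eg] := h3 (elimN eqP untied).
set al := P z s / _; set be := P (tau z) _ / _.
apply: (inVBs_ext (w1 := SA_comb (shift z r s (- d), g / 2%:R, (al + be) / 2%:R))).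
  move=> z'; rewrite mulNr -mulrBr /c (recombine_A _ _ (xy_diff_neq0 hij hjk hkn) two_neq0 eg).
  by rewrite /SA_comb /Svec /Avec.
by apply: inVBs_comb; split => /=; [exact: inZ0_shift | exact: Bfrac_half | exact: Bfrac_half].
Qed.

Lemma inVBs_Eop r d P (w : vec n) : (r.+1 < n)%N -> Bpair_for r P ->
  inVBs w -> inVBs (Eop r d P w).
Proof.
move=> hr hP [l [hl el]].
apply: (inVBs_ext (w1 := fun z' => \sum_(g <- l) (g.1.2 * Eop r d P (Svec k i j g.1.1) z' +
    g.2 * Eop r d P (Avec k i j g.1.1) z'))).
  by move=> z'; rewrite (eq_Eop r d P z' el) Eop_sum; apply: eq_bigr => g _; rewrite -Eop_lin.
apply: inVBs_sum => g /hl [hz hb hb']; apply: inVBs_add; apply: inVBs_scale => //.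
  exact: inVBs_Eop_S.
exact: inVBs_Eop_A.
Qed.

End Vectors.

Section Diagonal.
Variables (n k i j : nat).
Hypotheses (hij : (i < j)%N) (hjk : (j <= k)%N) (hkn : (k.+1 < n)%N).
Local Notation tau := (tau k i j).
Local Notation Bfrac := (@Bfrac n k i j).
Local Notation inVBs := (@inVBs n k i j).

Lemma rowsum_tau (z : Zvec n) r : rowsum (tau z) r = rowsum z r.
Proof.
rewrite /rowsum; have [er|ne] := eqVneq r.-1 k; last first.
  by apply: eq_bigr => t _; rewrite lamz_tau_other // ne.
have -> : r = k.+1 by lia.
have [hi hj] : (i < k.+1 /\ j < k.+1)%N by lia.
have hji : j != i by apply/eqP; lia.
pose R (z' : Zvec n) := \sum_(t < k.+1 | true && (t != i :> nat) && (t != j :> nat)) lamz z' k t.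
have split_ij (z' : Zvec n) : \sum_(t < k.+1) lamz z' k t = lamz z' k i + (lamz z' k j + R z').
  rewrite (@bigD1_ord_nat _ 0 +%R k.+1 predT (fun t => lamz z' k t) i) //.
  by rewrite (@bigD1_ord_nat _ 0 +%R k.+1 (fun t => true && (t != i)) (fun t => lamz z' k t) j).
have RR : R (tau z) = R z.
  by apply: eq_bigr => t /andP [/andP [_ ti] tj]; rewrite lamz_tau_other // ti tj orbT.
rewrite /= !split_ij RR lamz_tau_i // lamz_tau_j //; ring.
Qed.

Definition diag_coef (z : Zvec n) r := rowsum z r.+1 - rowsum z r + r%:R.

Lemma Bfrac_diag_coef (z : Zvec n) r : Bfrac (diag_coef z r).
Proof.
apply: Bfrac_add; last exact: Bfrac_nat.
by apply: Bfrac_sub; apply: Bfrac_sum => t _; apply: Bfrac_lamz.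
Qed.

Lemma diag_coef_SA_comb g (z' : Zvec n) r :
  diag_coef z' r * SA_comb k i j g z' = diag_coef g.1.1 r * SA_comb k i j g z'.
Proof.
rewrite /SA_comb /Svec /Avec /T.
have [->|n1] := eqVneq z' g.1.1; first by [].
have [->|n2] := eqVneq z' (tau g.1.1); first by rewrite /diag_coef !rowsum_tau.
by rewrite !(addr0, subrr, mul0r, mulr0).
Qed.

Lemma inVBs_Ediag r (w : vec n) : inVBs w -> inVBs (Ediag r w).
Proof.
move=> [l [hl el]].
apply: (inVBs_ext (w1 := fun z' => \sum_(g <- l) diag_coef g.1.1 r * SA_comb k i j g z')).
  by move=> z'; rewrite /Ediag el big_distrr; apply: eq_bigr => g _; rewrite -diag_coef_SA_comb.
by apply: inVBs_sum => g /hl hg; apply: inVBs_scale; [exact: Bfrac_diag_coef | exact: inVBs_comb].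
Qed.

End Diagonal.

Unset Implicit Arguments.

Theorem mainTheorem3 (n : nat) (hn : (2 <= n)%N) (k i j : nat)
  (hij : (i < j)%N) (hjk : (j <= k)%N) (hkn : (k.+1 < n)%N) :
  forall w : vec n, inVB k i j w ->
    (forall r : nat, (r.+1 < n)%N -> inVB k i j (Eup r w) /\ inVB k i j (Edown r w)) /\
    (forall r : nat, (r < n)%N -> inVB k i j (Ediag r w)).
Proof.
move=> w /inVBsP hw; split => [r hr|r _]; last exact/inVBsP/inVBs_Ediag.
have coef_up : Bpair_for k i j r (fun (z : Zvec n) s => lin_prod z r r.+1 r.+2 s).
  by move=> z s hs; apply: (Bpair_coef hij hjk hkn z) => //; lia.
have coef_down : Bpair_for k i j r (fun (z : Zvec n) s => lin_prod z r r.-1 r s).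
  by move=> z s hs; apply: (Bpair_coef hij hjk hkn z) => //; lia.
split; apply/inVBsP.
  apply: (inVBs_ext (w1 := fun z' => -1 * Eop r (-1) (fun z s => lin_prod z r r.+1 r.+2 s) w z')).
    by move=> z'; rewrite mulN1r.
  by apply: inVBs_scale; [exact: Bfrac_int (-1) | exact: inVBs_Eop].
by apply: (inVBs_ext (w1 := Eop r 1 (fun z s => lin_prod z r r.-1 r s) w)) => //; exact: inVBs_Eop.
Qed.
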